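(* Let $n,m\ge1$ and fix parameters $\alpha_k>0$, $v_k\in\mathbb{S}^{n-1}$, $b_k\in\mathbb{R}$, $k=1,\dots,m$. For $K<0$ and $x$ in the relevant model, let $u_k(x)=-\alpha_kB^{v_k}(x)+b_k$. (Poincaré) Fix $x\in\mathbb{R}^n$ (which lies in $\mathbb{P}^n_K$ for $|K|$ small) and let $y=\frac{\omega}{1+\sqrt{1-K\|\omega\|^2}}\in\mathbb{P}^m_K$ with $\omega_k=\frac{\sinh(\sqrt{-K}u_k(x))}{\sqrt{-K}}$. Then as $K\to0^-$, $y_k\to\alpha_k\langle v_k,x\rangle+\tfrac12 b_k$ for each $k$. (Lorentz) Fix $x_s\in\mathbb{R}^n$, let $x=[x_t,x_s^\top]^\top\in\mathbb{L}^n_K$ with $x_t=\sqrt{-1/K+\|x_s\|^2}$, and let $y_s=\frac{1}{\sqrt{-K}}\sinh(\sqrt{-K}\,u(x))$ (entrywise), $y_t=\sqrt{-1/K+\|y_s\|^2}$. Then as $K\to0^-$, $(y_s)_k\to\alpha_k\langle v_k,x_s\rangle+b_k$ for each $k$.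
   Context: $\mathbb{P}^n_K=\{x\in\mathbb{R}^n:\|x\|^2<-1/K\}$ with Busemann function $B^v(x)=\frac{1}{\sqrt{-K}}\log\frac{\|v-\sqrt{-K}x\|^2}{1+K\|x\|^2}$; $\mathbb{L}^n_K=\{x=[x_t,x_s^\top]^\top\in\mathbb{R}^{n+1}:-x_t^2+\|x_s\|^2=1/K,\ x_t>0\}$ with Busemann function $B^v(x)=\frac{1}{\sqrt{-K}}\log(\sqrt{-K}(x_t-\langle x_s,v\rangle))$; $\mathbb{S}^{n-1}$ is the Euclidean unit sphere and $u(x)=(u_1(x),\dots,u_m(x))^\top$. *)

From HB Require Import structures.
From mathcomp Require Import all_boot all_order all_algebra.
From mathcomp Require Import all_classical all_reals all_analysis.
Set Implicit Arguments. Unset Strict Implicit. Unset Printing Implicit Defensive.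
Import Order.TTheory GRing.Theory Num.Theory.
Local Open Scope ring_scope.

Definition dotv {R : realType} {n : nat} (x y : 'rV[R]_n) : R :=
  \sum_(i < n) x ord0 i * y ord0 i.
Definition sqnorm {R : realType} {n : nat} (x : 'rV[R]_n) : R := dotv x x.

Definition sinh {R : realType} (t : R) : R := (expR t - expR (- t)) / 2.

Definition busemannP {R : realType} {n : nat} (K : R) (v x : 'rV[R]_n) : R :=
  (Num.sqrt (- K))^-1 *
  ln (sqnorm (v - Num.sqrt (- K) *: x) / (1 + K * sqnorm x)).

Definition busemannL {R : realType} {n : nat} (K : R) (v : 'rV[R]_n)
  (xt : R) (xs : 'rV[R]_n) : R :=
  (Num.sqrt (- K))^-1 * ln (Num.sqrt (- K) * (xt - dotv xs v)).

Definition uP {R : realType} {n m : nat} (alpha b : 'I_m -> R)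
  (v : 'I_m -> 'rV[R]_n) (K : R) (x : 'rV[R]_n) (k : 'I_m) : R :=
  - alpha k * busemannP K (v k) x + b k.

Definition uL {R : realType} {n m : nat} (alpha b : 'I_m -> R)
  (v : 'I_m -> 'rV[R]_n) (K : R) (xt : R) (xs : 'rV[R]_n) (k : 'I_m) : R :=
  - alpha k * busemannL K (v k) xt xs + b k.

Definition omegaP {R : realType} {n m : nat} (alpha b : 'I_m -> R)
  (v : 'I_m -> 'rV[R]_n) (K : R) (x : 'rV[R]_n) : 'rV[R]_m :=
  \row_k (sinh (Num.sqrt (- K) * uP alpha b v K x k) / Num.sqrt (- K)).
Definition yP {R : realType} {n m : nat} (alpha b : 'I_m -> R)
  (v : 'I_m -> 'rV[R]_n) (K : R) (x : 'rV[R]_n) : 'rV[R]_m :=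
  (1 + Num.sqrt (1 - K * sqnorm (omegaP alpha b v K x)))^-1
    *: omegaP alpha b v K x.

Definition timeL {R : realType} {n : nat} (K : R) (xs : 'rV[R]_n) : R :=
  Num.sqrt (- K^-1 + sqnorm xs).
Definition ysL {R : realType} {n m : nat} (alpha b : 'I_m -> R)
  (v : 'I_m -> 'rV[R]_n) (K : R) (xs : 'rV[R]_n) : 'rV[R]_m :=
  \row_k (sinh (Num.sqrt (- K) * uL alpha b v K (timeL K xs) xs k)
          / Num.sqrt (- K)).
Definition ytL {R : realType} {n m : nat} (alpha b : 'I_m -> R)
  (v : 'I_m -> 'rV[R]_n) (K : R) (xs : 'rV[R]_n) : R :=
  timeL K (ysL alpha b v K xs).

(* With s = sqrt(-K), which tends to 0 as K -> 0-, both sinh(s u) / s and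
   ln(1 + s r) / s tend to the limit of u resp. r, because sinh and
   h |-> ln(1 + h) vanish at 0 with derivative 1.  Each Busemann function is
   of the second form: in the Poincare model the argument of the logarithm is
   1 + s r with r -> -2<v, x>, in the Lorentz model it is s (x_t - <x_s, v>)
   = 1 + s r with r -> -<x_s, v>, since s x_t = sqrt(1 + s^2 |x_s|^2).  The
   coordinates then tend to affine functions of x, and the Poincare
   normalisation 1 + sqrt(1 - K |omega|^2) tends to 2. *)

From HB Require Import structures.
From mathcomp Require Import all_boot all_order all_algebra.
From mathcomp Require Import all_classical all_reals all_analysis.
From mathcomp Require Import ring lra.
Import Order.TTheory GRing.Theory Num.Theory.
Import numFieldTopology.Exports numFieldNormedType.Exports.
Set Implicit Arguments.
Unset Strict Implicit.
Unset Printing Implicit Defensive.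
Local Open Scope ring_scope.
Local Open Scope classical_set_scope.

Section rescaling.
Context {R : realType}.

Lemma sinh0 : sinh (0 : R) = 0.
Proof. by rewrite /sinh oppr0 subrr mul0r. Qed.

Lemma is_derive_cvg_quotient (f : R -> R) (a l : R) : is_derive a 1 f l ->
  h^-1 * (f (h + a) - f a) @[h --> 0^'] --> l.
Proof.
move=> [/cvg_ex[l' fl'] <-]; rewrite /derive (cvg_lim _ fl') //.
by apply: cvg_trans fl'; apply: near_eq_cvg; near=> h; rewrite /= [h%:A]mulr1.
Unshelve. all: end_near. Qed.

Lemma is_derive0_sinh : is_derive (0 : R) 1 sinh 1.
Proof.
have dexpN : is_derive (0 : R) 1 (expR \o -%R) (expR (- 0) * - 1).
  exact: is_derive1_comp.
have := is_deriveZ (2^-1) (is_deriveB (is_derive_expR 0) dexpN).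
have -> : (2^-1 \*: (expR - (expR \o -%R))) = sinh :> (R -> R).
  by apply/funext => t; rewrite /sinh /= mulrC.
move/is_derive_eq; apply; rewrite oppr0 expR0 -[_ *: _]/(_ * _); lra.
Qed.

Lemma is_derive0_ln_shift1 : is_derive (0 : R) 1 (@ln R \o shift 1) 1.
Proof.
have dln : is_derive (shift 1 0 : R) 1 (@ln R) (shift 1 0)^-1.
  by apply: is_derive1_ln; rewrite /shift add0r.
apply: (is_derive_eq (is_derive1_comp dln (is_derive_shift (0 : R) 1 1))).
by rewrite /shift add0r invr1 mulr1.
Qed.

(* Patched with the limit [l] at 0, so that it stays continuous along maps
   that may hit 0. *)
Definition slope0 (g : R -> R) (l h : R) : R := if h == 0 then l else h^-1 * g h.

Lemma slope0E (g : R -> R) (l h : R) : g 0 = 0 -> g h = h * slope0 g l h.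
Proof.
rewrite /slope0; case: eqP => [-> -> | /eqP h0 _]; first by rewrite mul0r.
by rewrite mulVKf.
Qed.

Lemma cvg_slope0 (g : R -> R) (l : R) : g 0 = 0 -> is_derive (0 : R) 1 g l ->
  slope0 g l h @[h --> 0] --> l.
Proof.
move=> g0 dg.
rewrite [X in _ --> X](_ : l = slope0 g l 0); last by rewrite /slope0 eqxx.
apply/continuous_withinNx; rewrite [X in _ --> X]/slope0 eqxx.
apply: cvg_trans (is_derive_cvg_quotient dg); apply: near_eq_cvg; near=> h.
have /negbTE h0 : h != 0 by near: h; exact: nbhs_dnbhs_neq.
by rewrite /slope0 h0 addr0 g0 subr0.
Unshelve. all: end_near. Qed.

Lemma cvg_rescale {T : Type} (F : set_system T) {FF : Filter F} (g : R -> R) (l : R)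
    (s u : T -> R) (c : R) :
  g 0 = 0 -> is_derive (0 : R) 1 g l ->
  s t @[t --> F] --> 0 -> (\forall t \near F, s t != 0) -> u t @[t --> F] --> c ->
  (s t)^-1 * g (s t * u t) @[t --> F] --> c * l.
Proof.
move=> g0 dg s0 sn0 uc.
have su0 : s t * u t @[t --> F] --> 0 by have := cvgM s0 uc; rewrite mul0r; apply.
apply: cvg_trans (cvgM uc (cvg_comp _ _ su0 (cvg_slope0 g0 dg))).
apply: near_eq_cvg; near=> t.
by rewrite /= (slope0E l _ g0) -mulrA mulKf //; near: t.
Unshelve. all: end_near. Qed.

End rescaling.

Section vanishing_curvature.
Context {R : realType}.

Lemma cvg_left0_id : K @[K --> (0 : R)^'-] --> 0.
Proof. exact: cvg_at_left_filter. Qed.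

Lemma cvg_sqrtN_left0 : Num.sqrt (- K) @[K --> (0 : R)^'-] --> 0.
Proof.
have := cvg_comp _ _ (cvgN cvg_left0_id) (@sqrt_continuous R (- 0)).
by rewrite oppr0 sqrtr0; apply.
Qed.

Lemma near_left0_sqrtN_neq0 : \forall K \near (0 : R)^'-, Num.sqrt (- K) != 0.
Proof.
near=> K; rewrite gt_eqF // sqrtr_gt0 oppr_gt0.
by near: K; exact: nbhs_left_lt.
Unshelve. all: end_near. Qed.

Lemma cvg_sinh_rescale (u : R -> R) (c : R) : u K @[K --> 0^'-] --> c ->
  sinh (Num.sqrt (- K) * u K) / Num.sqrt (- K) @[K --> (0 : R)^'-] --> c.
Proof.
move=> uc; rewrite -[c]mulr1.
apply: cvg_trans (cvg_rescale sinh0 is_derive0_sinh cvg_sqrtN_left0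
  near_left0_sqrtN_neq0 uc).
by apply: near_eq_cvg; near=> K; rewrite mulrC.
Unshelve. all: end_near. Qed.

Lemma cvg_ln_rescale (r : R -> R) (c : R) : r K @[K --> 0^'-] --> c ->
  (Num.sqrt (- K))^-1 * ln (Num.sqrt (- K) * r K + 1) @[K --> (0 : R)^'-] --> c.
Proof.
move=> rc; rewrite -[c]mulr1.
have ln1 : (@ln R \o shift 1) 0 = 0 by rewrite /= /shift add0r ln1.
exact: cvg_rescale ln1 is_derive0_ln_shift1 cvg_sqrtN_left0 near_left0_sqrtN_neq0 rc.
Qed.

Lemma cvg_sqrt1BK (a : R -> R) (c : R) : a K @[K --> 0^'-] --> c ->
  Num.sqrt (1 - K * a K) @[K --> (0 : R)^'-] --> (1 : R).
Proof.
move=> ac; have h : 1 - K * a K @[K --> 0^'-] --> 1 - 0 * c.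
  by apply: cvgB; [exact: cvg_cst | exact: cvgM cvg_left0_id ac].
rewrite mul0r subr0 in h; rewrite -[X in _ --> X]sqrtr1.
exact: cvg_comp _ _ h (@sqrt_continuous R 1).
Qed.

End vanishing_curvature.

Section euclidean.
Variables (R : realType) (n : nat).
Implicit Types a b : 'rV[R]_n.

Lemma dotvC a b : dotv a b = dotv b a.
Proof. by apply: eq_bigr => i _; rewrite mulrC. Qed.

Lemma sqnorm_ge0 a : 0 <= sqnorm a.
Proof. by apply: sumr_ge0 => i _; rewrite -expr2 sqr_ge0. Qed.

Lemma sqnormBZ a b (c : R) :
  sqnorm (a - c *: b) = sqnorm a - 2 * c * dotv a b + c ^+ 2 * sqnorm b.
Proof.
rewrite /sqnorm /dotv !mulr_sumr -sumrB -big_split /=.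
by apply: eq_bigr => i _; rewrite !mxE; ring.
Qed.

Lemma cvg_sqnorm {T : Type} (F : set_system T) {FF : Filter F} (w : T -> 'rV[R]_n)
    (c : 'I_n -> R) :
  (forall j, w t ord0 j @[t --> F] --> c j) ->
  sqnorm (w t) @[t --> F] --> \sum_(j < n) c j * c j.
Proof.
move=> wc; apply: cvg_big => //; first exact: add_continuous.
by move=> j _; exact: cvgM.
Qed.

End euclidean.

Section busemann.
Variables (R : realType) (n : nat).
Implicit Types v x xs : 'rV[R]_n.

Lemma busemannP_cvg v x : sqnorm v = 1 ->
  busemannP K v x @[K --> (0 : R)^'-] --> - 2 * dotv v x.
Proof.
move=> v1; set d := dotv v x; set q := sqnorm x.
have den_cvg : 1 + K * q @[K --> (0 : R)^'-] --> (1 : R).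
  have := cvgD (cvg_cst (1 : R)) (cvgM cvg_left0_id (cvg_cst q)).
  by rewrite mul0r addr0; apply.
have r_cvg : (2 * Num.sqrt (- K) * q - 2 * d) / (1 + K * q) @[K --> (0 : R)^'-]
    --> - 2 * d.
  rewrite (_ : - 2 * d = (2 * 0 * q - 2 * d) / 1); last first.
    by rewrite mulr0 mul0r sub0r invr1 mulr1 mulNr.
  apply: cvgM; last exact: cvgV (oner_neq0 R) den_cvg.
  apply: cvgB; last exact: cvg_cst.
  apply: cvgM; last exact: cvg_cst.
  by apply: cvgM; [exact: cvg_cst | exact: cvg_sqrtN_left0].
apply: cvg_trans (cvg_ln_rescale r_cvg); apply: near_eq_cvg; near=> K.
have K0 : K < 0 by near: K; exact: nbhs_left_lt.
have den0 : 1 + K * q != 0.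
  by apply: lt0r_neq0; near: K; exact: (@cvgr_gt R _ _ _ _ _ den_cvg _ ltr01).
rewrite /= /busemannP sqnormBZ v1 -/d -/q; congr (_ * ln _).
set s := Num.sqrt (- K) in den0 *.
have eK : K = - s ^+ 2 by rewrite sqr_sqrtr ?opprK // oppr_ge0 ltW.
by move: den0; rewrite eK mulNr => den0; field.
Unshelve. all: end_near. Qed.

Lemma sqrtN_mul_timeL (K : R) xs : K < 0 ->
  Num.sqrt (- K) * timeL K xs = Num.sqrt (1 - K * sqnorm xs).
Proof.
move=> K0; rewrite /timeL -sqrtrM ?oppr_ge0 ?ltW //; congr Num.sqrt.
by field; exact: ltr0_neq0.
Qed.

Lemma busemannL_cvg v xs :
  busemannL K v (timeL K xs) xs @[K --> (0 : R)^'-] --> - dotv xs v.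
Proof.
set d := dotv xs v; set q := sqnorm xs.
have T_cvg : Num.sqrt (1 - K * q) @[K --> (0 : R)^'-] --> (1 : R).
  exact: cvg_sqrt1BK (cvg_cst q).
have r_cvg : Num.sqrt (- K) * q / (Num.sqrt (1 - K * q) + 1) - d @[K --> (0 : R)^'-]
    --> - d.
  rewrite [X in _ --> X](_ : - d = 0 * q / 2 - d); last by rewrite !mul0r sub0r.
  apply: cvgB; last exact: cvg_cst.
  apply: cvgM; first by apply: cvgM; [exact: cvg_sqrtN_left0 | exact: cvg_cst].
  apply: cvgV; first by rewrite pnatr_eq0.
  by apply: cvgD; [exact: T_cvg | exact: cvg_cst].
apply: cvg_trans (cvg_ln_rescale r_cvg); apply: near_eq_cvg; near=> K.
have K0 : K < 0 by near: K; exact: nbhs_left_lt.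
rewrite /= /busemannL [in RHS]mulrBr sqrtN_mul_timeL // -/q; congr (_ * ln _).
set s := Num.sqrt (- K); set T := Num.sqrt (1 - K * q).
have T1 : T + 1 != 0 by rewrite gt_eqF // ltr_wpDl ?sqrtr_ge0.
have T2 : T ^+ 2 = 1 + s ^+ 2 * q.
  have Kq : K * q <= 0 := mulr_le0_ge0 (ltW K0) (sqnorm_ge0 xs).
  by rewrite !sqr_sqrtr ?mulNr //; lra.
apply/eqP; rewrite -subr_eq0.
have -> : s * (s * q / (T + 1) - d) + 1 - (T - s * d)
    = (1 + s ^+ 2 * q - T ^+ 2) / (T + 1).
  by field.
by rewrite T2 subrr mul0r.
Unshelve. all: end_near. Qed.

End busemann.

Lemma cvg_stereographic (R : realType) (m : nat) (w : R -> 'rV[R]_m) (c : 'I_m -> R)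
    (k : 'I_m) :
  (forall j, w K ord0 j @[K --> 0^'-] --> c j) ->
  ((1 + Num.sqrt (1 - K * sqnorm (w K)))^-1 *: w K) ord0 k @[K --> (0 : R)^'-]
    --> c k / 2.
Proof.
move=> wc; rewrite mulrC.
have scale_cvg :
    (1 + Num.sqrt (1 - K * sqnorm (w K)))^-1 @[K --> (0 : R)^'-] --> (2^-1 : R).
  apply: cvgV; first by rewrite pnatr_eq0.
  by apply: cvgD; [exact: cvg_cst | exact: cvg_sqrt1BK (cvg_sqnorm wc)].
apply: cvg_trans (cvgM scale_cvg (wc k)); apply: near_eq_cvg; near=> K.
by rewrite mxE.
Unshelve. all: end_near. Qed.

Theorem theorem5 (R : realType) (n m : nat) (hn : (1 <= n)%N) (hm : (1 <= m)%N)
  (alpha : 'I_m -> R) (v : 'I_m -> 'rV[R]_n) (b : 'I_m -> R)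
  (halpha : forall k, 0 < alpha k)
  (hv : forall k, sqnorm (v k) = 1) :
  (forall (x : 'rV[R]_n) (k : 'I_m),
     yP alpha b v K x ord0 k @[K --> 0^'-]
       --> alpha k * dotv (v k) x + b k / 2) /\
  (forall (xs : 'rV[R]_n) (k : 'I_m),
     ysL alpha b v K xs ord0 k @[K --> 0^'-]
       --> alpha k * dotv (v k) xs + b k).
Proof.
split=> [x k | xs k].
- pose c j := - alpha j * (- 2 * dotv (v j) x) + b j.
  have u_cvg j : uP alpha b v K x j @[K --> (0 : R)^'-] --> c j.
    apply: cvgD; last exact: cvg_cst.
    by apply: cvgM; [exact: cvg_cst | exact: busemannP_cvg].
  have w_cvg j : omegaP alpha b v K x ord0 j @[K --> (0 : R)^'-] --> c j.
    apply: cvg_trans (cvg_sinh_rescale (u_cvg j)); apply: near_eq_cvg.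
    by near=> K; rewrite mxE.
  rewrite (_ : _ + _ = c k / 2); last by rewrite /c; field.
  exact: cvg_stereographic k w_cvg.
- have u_cvg : uL alpha b v K (timeL K xs) xs k @[K --> (0 : R)^'-]
      --> - alpha k * - dotv xs (v k) + b k.
    apply: cvgD; last exact: cvg_cst.
    by apply: cvgM; [exact: cvg_cst | exact: busemannL_cvg].
  rewrite mulrNN dotvC in u_cvg.
  apply: cvg_trans (cvg_sinh_rescale u_cvg); apply: near_eq_cvg.
  by near=> K; rewrite mxE.
Unshelve. all: end_near. Qed.
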